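(* Let $K$ be a positive integer, let $\lambda_1^\star,\dots,\lambda_K^\star\ge0$, $C_1,\dots,C_K\ge0$, and $\mathcal{F}_1,\dots,\mathcal{F}_K\in(0,1)$. Set $\gamma_{-1}=\gamma_0=0$, $m_0=-1$, and for $k=1,\dots,K$ recursively $m_k=\max\{\mathcal{F}_k,\gamma_{k-1}\}$ and $\gamma_k=\frac1{k+1}+\frac{k}{k+1}m_k$. Let $\hat s_1\le\dots\le\hat s_K$ be integers with $\hat s_1\ge1$ and $1=s_0\le s_1\le\dots\le s_K$ be integers. Let $D_{k,s_k-1}\ge0$ ($k\in[K]$) be given, and let real numbers $B_{k,\ell}$ (integers $\ell\ge\hat s_k$) and $G_{k,\ell}$ (integers $\ell\ge s_k-1$) satisfy $0\le B_{k,\ell}\le2$ and, for all $k\in[K]$, $$B_{k,\ell}\le C_k\sum_{k'=1}^{k-1}\lambda_{k'}^\star G_{k',\ell-1}\quad(\ell\ge\hat s_k),$$ $$G_{k,\ell}\le\mathcal{F}_k^{\ell-s_k+1}D_{k,s_k-1}+\sum_{\ell'=s_k-1}^{\ell-1}\mathcal{F}_k^{\ell-\ell'}\big(B_{k,\ell'}+B_{k,\ell'-1}\big)+B_{k,\ell}\quad(\ell\ge s_k-1).$$ Define, recursively in $k$, $$\hat B_{k,\hat s_k}=C_k\sum_{k'=1}^{k-1}\lambda_{k'}^\star\hat G_{k',\hat s_k-1},\qquad \hat B_{k,\ell}=\min\big\{2,\ m_{k-1}^{\ell-\hat s_k}(\ell-\hat s_k+1)\hat B_{k,\hat s_k}\big\}\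 (\ell>\hat s_k),$$ $$\hat G_{k,s_k-1}=D_{k,s_k-1}+\hat B_{k,s_k-1}+\hat B_{k,s_k-2},\qquad \hat G_{k,\ell}=m_k^{\ell-s_k+1}(\ell-s_k+2)\hat G_{k,s_k-1}\ (\ell\ge s_k).$$ Suppose that for all $k\in[K]$: $\hat s_{k+1}\ge s_k$ (when $k<K$), $m_{k-1}^{s_k-\hat s_k-2}\le\frac{1}{s_k-\hat s_k-1}$, $s_k\ge\frac{km_{k-1}}{1-m_{k-1}}+\hat s_k+2$, and $\hat B_{k,\hat s_k}\le2$. Then for all $k\in[K]$: (1) $\hat B_{k,\ell}\ge B_{k,\ell}$ for all $\ell\ge\hat s_k$; and (2) $\hat G_{k,\ell}\ge G_{k,\ell}$ for all $\ell\ge s_k-1$.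
   Context: $[K]=\{1,\dots,K\}$. All indices $\ell,\ell'$ are integers. In the paper's application, $B_{k,\ell}=\|\mathbf{u}_{k,\ell}-\mathbf{u}_k^\star\|_2$ and $G_{k,\ell}=\|\mathbf{u}_k^\star-\mathbf{v}_{k,\ell}\|_2$ are distances between unit vectors and $D_{k,\ell}=\|\mathbf{v}_{k,\ell}-\mathbf{u}_{k,\ell}\|_2$, but the lemma is a statement about arbitrary sequences satisfying the displayed inequalities. *)

From mathcomp Require Import all_boot all_order all_algebra.
From mathcomp Require Import reals.
Set Implicit Arguments. Unset Strict Implicit. Unset Printing Implicit Defensive.
Import Order.TTheory GRing.Theory Num.Theory.
Local Open Scope ring_scope.

(* gamma_0 = 0, gamma_k = 1/(k+1) + k/(k+1) * max(F_k, gamma_{k-1}) for k >= 1.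
   (gamma_{-1} is never used since m_0 = -1 is fixed explicitly.) *)
Fixpoint gam (R : realType) (F : nat -> R) (k : nat) : R :=
  match k with
  | 0%N => 0
  | k'.+1 => 1 / (k'.+2)%:R + (k'.+1)%:R / (k'.+2)%:R * Num.max (F k'.+1) (gam F k')
  end.

Definition mseq (R : realType) (F : nat -> R) (k : nat) : R :=
  match k with
  | 0%N => -1
  | k'.+1 => Num.max (F k'.+1) (gam F k')
  end.

From mathcomp Require Import all_boot all_order all_algebra.
From mathcomp Require Import reals.
From mathcomp Require Import ring lra zify.
Set Implicit Arguments.
Unset Strict Implicit.
Unset Printing Implicit Defensive.
Import Order.TTheory GRing.Theory Num.Theory.
Local Open Scope ring_scope.

(* For k' < k we have m_k' <= m_(k-1), so from index sh k - 1 to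
   index l - 1 the closed form of Gh k' grows by at most m_(k-1)^t (t+1), t = l - sh k,
   and the induction hypothesis gives B k l <= m_(k-1)^t (t+1) Bh k (sh k).  Since
   m_k >= gam (k-1) = m_(k-1) + (1 - m_(k-1)) / k and t0 = s k - sh k - 2 is at least
   k m_(k-1) / (1 - m_(k-1)), consecutive terms of m_(k-1)^t (t+1) have ratio at most
   m_k from t0 on; with m_(k-1)^t0 (t0+1) <= 1 the minimum with 2 is inactive from
   s k - 2 on, and Bh k decays there with ratio m_k.  As F k <= m_k, each of the
   l - s k + 2 groups of terms in the bound on G k l is then at most
   m_k^(l - s k + 1) (D k + Bh k (s k - 1) + Bh k (s k - 2)). *)

Section GammaSequence.
Variables (R : realType) (F : nat -> R).

Lemma F_le_mseq k : (0 < k)%N -> F k <= mseq F k.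
Proof. by case: k => // k _; rewrite le_max lexx. Qed.

Lemma gam_le_mseqS k : gam F k <= mseq F k.+1.
Proof. by rewrite /= le_max lexx orbT. Qed.

Lemma gamS k : gam F k.+1 = mseq F k.+1 + (1 - mseq F k.+1) / k.+2%:R.
Proof.
have k1E : k.+1%:R = k.+2%:R - 1 :> R by rewrite [k.+2%:R]mulrSr addrK.
by rewrite /= k1E; field; rewrite -natrD pnatr_eq0.
Qed.

Lemma mseq_le_gam k : mseq F k.+1 <= 1 -> mseq F k.+1 <= gam F k.+1.
Proof.
by move=> m_le1; rewrite gamS lerDl divr_ge0 // subr_ge0.
Qed.

Variable K : nat.
Hypothesis F_gt0_lt1 : forall k, (1 <= k <= K)%N -> 0 < F k < 1.

Lemma gam_ge0_lt1 k : (k <= K)%N -> 0 <= gam F k < 1.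
Proof.
elim: k => [|k IHk] kK; first by rewrite lexx ltr01.
have /andP[g_ge0 g_lt1] := IHk (ltnW kK).
have /andP[F_gt0 F_lt1] := F_gt0_lt1 (k:=k.+1) kK.
have m_ge0 : 0 <= mseq F k.+1 by rewrite le_max g_ge0 orbT.
have m_lt1 : mseq F k.+1 < 1 by rewrite gt_max F_lt1.
have k2_gt1 : 1 < k.+2%:R :> R by rewrite ltr1n.
have frac_lt : (1 - mseq F k.+1) / k.+2%:R < 1 - mseq F k.+1.
  by rewrite ltr_pdivrMr ?(lt_trans ltr01) // ltr_pMr // subr_gt0.
rewrite gamS; set q := _ / _ in frac_lt *; apply/andP; split; last by lra.
by rewrite addr_ge0 // divr_ge0 // subr_ge0 ltW.
Qed.

Lemma mseq_gt0_lt1 k : (1 <= k <= K)%N -> 0 < mseq F k < 1.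
Proof.
case: k => // k kK.
have /andP[g_ge0 g_lt1] := gam_ge0_lt1 (ltnW kK).
have /andP[F_gt0 F_lt1] := F_gt0_lt1 (k:=k.+1) kK.
by rewrite lt_max F_gt0 gt_max F_lt1 g_lt1.
Qed.

Lemma mseq_le_mseqS k : (1 <= k < K)%N -> mseq F k <= mseq F k.+1.
Proof.
case: k => // k kK; apply: le_trans (gam_le_mseqS k.+1).
have /andP[_ m_lt1] := mseq_gt0_lt1 (k:=k.+1) (ltnW kK).
exact/mseq_le_gam/ltW.
Qed.

Lemma mseq_homo i j : (1 <= i <= j)%N -> (j <= K)%N -> mseq F i <= mseq F j.
Proof.
case/andP=> i_gt0; elim: j => [|j IHj]; first by rewrite leqn0 => /eqP ->.
rewrite leq_eqVlt => /orP[/eqP -> // | ij] jK.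
apply: le_trans (IHj ij (ltnW jK)) (mseq_le_mseqS _).
by rewrite jK (leq_trans i_gt0).
Qed.

End GammaSequence.

Lemma ratio_le (R : realFieldType) (k : nat) (M m t : R) :
  (0 < k)%N -> 0 <= M < 1 -> k%:R * M / (1 - M) <= t -> M + (1 - M) / k%:R <= m ->
  M * (t + 2) <= m * (t + 1).
Proof.
move=> k_gt0 /andP[M_ge0 M_lt1] t_ge m_ge.
have k_gt0' : 0 < k%:R :> R by rewrite ltr0n.
have t_ge0 : 0 <= t by apply: le_trans t_ge; rewrite divr_ge0 ?mulr_ge0 // subr_ge0 ltW.
have kM_le : k%:R * M <= t * (1 - M) by rewrite -ler_pdivrMr // subr_gt0.
have m_t1 : (M + (1 - M) / k%:R) * (t + 1) <= m * (t + 1) by rewrite ler_wpM2r // addr_ge0.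
suff M_le : M <= (1 - M) / k%:R * (t + 1) by lra.
rewrite mulrAC ler_pdivlMr //; nra.
Qed.

Section LinearGeometric.
Variable R : realFieldType.

Definition geom_lin (a : R) (t : nat) : R := a ^+ t * t.+1%:R.

Lemma geom_lin0 a : geom_lin a 0 = 1.
Proof. by rewrite /geom_lin expr0 mul1r. Qed.

Lemma geom_lin_ge0 a t : 0 <= a -> 0 <= geom_lin a t.
Proof. by move=> a_ge0; rewrite mulr_ge0 ?exprn_ge0. Qed.

Lemma geom_lin_addn_le q M j t :
  0 <= q <= M -> geom_lin q (j + t) <= geom_lin M t * geom_lin q j.
Proof.
case/andP=> q_ge0 qM; rewrite /geom_lin exprD.
have qtM : q ^+ t <= M ^+ t by rewrite lerXn2r ?nnegrE // (le_trans q_ge0).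
have jt : (j + t).+1%:R <= t.+1%:R * j.+1%:R :> R by rewrite -natrM ler_nat; lia.
have -> : q ^+ j * q ^+ t * (j + t).+1%:R = q ^+ j * (q ^+ t * (j + t).+1%:R) by ring.
have -> : M ^+ t * t.+1%:R * (q ^+ j * j.+1%:R) = q ^+ j * (M ^+ t * (t.+1%:R * j.+1%:R)) by ring.
by rewrite ler_wpM2l ?exprn_ge0 // ler_pM ?exprn_ge0.
Qed.

Lemma geom_lin_decay M m t0 j i :
  0 <= M -> 0 <= m -> (forall t, (t0 <= t)%N -> M * (t%:R + 2) <= m * (t%:R + 1)) ->
  (t0 <= j)%N -> geom_lin M (j + i) <= m ^+ i * geom_lin M j.
Proof.
move=> M_ge0 m_ge0 ratio tj; elim: i => [|i IHi]; first by rewrite addn0 expr0 mul1r.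
have step : geom_lin M (j + i).+1 <= m * geom_lin M (j + i).
  have -> : geom_lin M (j + i).+1 = M ^+ (j + i) * (M * ((j + i)%:R + 2)).
    by rewrite /geom_lin exprS -addn2 natrD; ring.
  have -> : m * geom_lin M (j + i) = M ^+ (j + i) * (m * ((j + i)%:R + 1)).
    by rewrite /geom_lin -addn1 natrD; ring.
  by rewrite ler_wpM2l ?exprn_ge0 // ratio // (leq_trans tj) ?leq_addr.
by rewrite addnS (le_trans step) // exprS -mulrA ler_wpM2l.
Qed.

End LinearGeometric.

Lemma first_mid_last_le (R : realFieldType) (c d a1 a2 : R) (n : nat) :
  0 <= c -> 0 <= d -> 0 <= a1 -> 0 <= a2 ->
  c * d + (c * (a1 + a2)) *+ n + c * a1 <= c * n.+1%:R * (d + a1 + a2).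
Proof.
move=> c_ge0 d_ge0 a1_ge0 a2_ge0.
have cdn_ge0 : 0 <= c * d * n%:R by rewrite !mulr_ge0.
have ca2_ge0 : 0 <= c * a2 by rewrite mulr_ge0.
rewrite -mulr_natr -addn1 natrD; nra.
Qed.

Section Propagation.
Variables (R : realType) (K : nat) (lam C F D : nat -> R) (sh s : nat -> nat).
Variables (B G Bh Gh : nat -> nat -> R).
Hypothesis lam_ge0 : forall k, (1 <= k <= K)%N -> 0 <= lam k.
Hypothesis C_ge0 : forall k, (1 <= k <= K)%N -> 0 <= C k.
Hypothesis F_gt0_lt1 : forall k, (1 <= k <= K)%N -> 0 < F k < 1.
Hypothesis sh_leS : forall k, (1 <= k < K)%N -> (sh k <= sh k.+1)%N.
Hypothesis D_ge0 : forall k, (1 <= k <= K)%N -> 0 <= D k.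
Hypothesis B_ge0_le2 : forall k l, (1 <= k <= K)%N -> (sh k <= l)%N -> 0 <= B k l <= 2.
Hypothesis B_le_sum : forall k l, (1 <= k <= K)%N -> (sh k <= l)%N ->
  B k l <= C k * \sum_(1 <= k' < k) lam k' * G k' l.-1.
Hypothesis G_le_sum : forall k l, (1 <= k <= K)%N -> (s k - 1 <= l)%N ->
  G k l <= F k ^+ (l - (s k - 1)) * D k
           + \sum_(s k - 1 <= l' < l) F k ^+ (l - l') * (B k l' + B k l'.-1) + B k l.
Hypothesis Bh_sh : forall k, (1 <= k <= K)%N ->
  Bh k (sh k) = C k * \sum_(1 <= k' < k) lam k' * Gh k' (sh k).-1.
Hypothesis Bh_gt_sh : forall k l, (1 <= k <= K)%N -> (sh k < l)%N ->
  Bh k l = Num.min 2 (mseq F k.-1 ^+ (l - sh k) * (l - sh k).+1%:R * Bh k (sh k)).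
Hypothesis Gh_s1 : forall k, (1 <= k <= K)%N ->
  Gh k (s k - 1)%N = D k + Bh k (s k - 1)%N + Bh k (s k - 2)%N.
Hypothesis Gh_ge_s : forall k l, (1 <= k <= K)%N -> (s k <= l)%N ->
  Gh k l = mseq F k ^+ (l - s k).+1 * (l - s k).+2%:R * Gh k (s k - 1)%N.
Hypothesis s_le_shS : forall k, (1 <= k < K)%N -> (s k <= sh k.+1)%N.
Hypothesis mseq_exp_le : forall k, (1 <= k <= K)%N ->
  mseq F k.-1 ^+ (s k - sh k - 2) <= 1 / ((s k)%:R - (sh k)%:R - 1).
Hypothesis s_ge : forall k, (1 <= k <= K)%N ->
  k%:R * mseq F k.-1 / (1 - mseq F k.-1) + (sh k)%:R + 2 <= (s k)%:R.
Hypothesis Bh_sh_le2 : forall k, (1 <= k <= K)%N -> Bh k (sh k) <= 2.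

Lemma sh_homo i j : (1 <= i <= j)%N -> (j <= K)%N -> (sh i <= sh j)%N.
Proof.
case/andP=> i_gt0; elim: j => [|j IHj]; first by rewrite leqn0 => /eqP ->.
rewrite leq_eqVlt => /orP[/eqP -> // | ij] jK.
by rewrite (leq_trans (IHj ij (ltnW jK))) // sh_leS // jK (leq_trans i_gt0).
Qed.

Lemma s_le_sh k' k : (1 <= k' < k)%N -> (k <= K)%N -> (s k' <= sh k)%N.
Proof.
case/andP=> k'_gt0 k'k kK.
apply: (@leq_trans (sh k'.+1)); first by rewrite s_le_shS // k'_gt0 (leq_trans k'k).
by rewrite sh_homo // k'k.
Qed.

Lemma sh_add2_le_s k : (1 <= k <= K)%N -> (sh k + 2 <= s k)%N.
Proof.
move=> kK; rewrite addn2 -addn1 -(ltr_nat R) natrD; have := s_ge kK.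
suff : -1 < k%:R * mseq F k.-1 / (1 - mseq F k.-1) :> R by lra.
case: k kK => [|[|k]] // kK; first by rewrite /= mul1r opprK mulN1r ltrN2 invf_lt1 ?addr_gt0 // ltrDl.
have /andP[m_gt0 m_lt1] := mseq_gt0_lt1 F_gt0_lt1 (k:=k.+1) (ltnW kK).
by rewrite (@lt_le_trans _ _ 0) ?ltrN10 // divr_ge0 ?mulr_ge0 ?(ltW m_gt0) // subr_ge0 ltW.
Qed.

Lemma Gh_shift k i : (1 <= k <= K)%N ->
  Gh k (s k - 1 + i)%N = geom_lin (mseq F k) i * Gh k (s k - 1)%N.
Proof.
move=> kK; case: i => [|i]; first by rewrite addn0 geom_lin0 mul1r.
have s_ge2 := sh_add2_le_s kK.
by rewrite Gh_ge_s //; [congr (_ ^+ _ * _%:R * _) | ]; lia.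
Qed.

Section InductionStep.
Variable k : nat.
Hypothesis kK : (1 <= k <= K)%N.
Hypothesis G_le_Gh_prev : forall k' l, (1 <= k' < k)%N -> (s k' - 1 <= l)%N ->
  G k' l <= Gh k' l.
Hypothesis Gh_ge0_prev : forall k' l, (1 <= k' < k)%N -> (s k' - 1 <= l)%N ->
  0 <= Gh k' l.

Local Notation M := (mseq F k.-1).
Local Notation m := (mseq F k).
Local Notation b := (Bh k (sh k)).
Local Notation t0 := (s k - sh k - 2)%N.

Let prev_le_K k' : (1 <= k' < k)%N -> (1 <= k' <= K)%N.
Proof. by move: kK; lia. Qed.

Let s_prev_le k' : (1 <= k' < k)%N -> (s k' - 1 <= (sh k).-1)%N.
Proof. by move=> k'k; have := s_le_sh k'k (proj2 (andP kK)); lia. Qed.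

Let sh_add2_le : (sh k + 2 <= s k)%N.
Proof. exact: sh_add2_le_s. Qed.

Let m_gt0_lt1 : 0 < m < 1.
Proof. exact (mseq_gt0_lt1 F_gt0_lt1 kK). Qed.

Lemma Bh_sh_ge0 : 0 <= b.
Proof.
rewrite Bh_sh // mulr_ge0 ?C_ge0 // big_nat sumr_ge0 // => k' k'k.
by rewrite mulr_ge0 ?lam_ge0 ?Gh_ge0_prev ?prev_le_K ?s_prev_le.
Qed.

Lemma Gh_prev_growth k' l : (1 <= k' < k)%N -> (sh k <= l)%N ->
  Gh k' l.-1 <= geom_lin M (l - sh k) * Gh k' (sh k).-1.
Proof.
move=> k'k shl; have k'K := prev_le_K k'k.
have s_sh := s_le_sh k'k (proj2 (andP kK)); have s2 := sh_add2_le_s k'K.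
have -> : l.-1 = (s k' - 1 + ((sh k - s k') + (l - sh k)))%N by lia.
have -> : (sh k).-1 = (s k' - 1 + (sh k - s k'))%N by lia.
rewrite !Gh_shift // mulrA ler_wpM2r ?Gh_ge0_prev ?leq_addr // geom_lin_addn_le //.
have /andP[m'_gt0 _] := mseq_gt0_lt1 F_gt0_lt1 k'K.
by rewrite ltW // (mseq_homo F_gt0_lt1) //; move: kK k'k; lia.
Qed.

Lemma B_le_geom_lin l : (sh k <= l)%N -> B k l <= geom_lin M (l - sh k) * b.
Proof.
move=> shl; apply: le_trans (B_le_sum kK shl) _.
rewrite Bh_sh // [X in _ <= X]mulrCA ler_wpM2l ?C_ge0 // mulr_sumr.
apply: ler_sum_nat => k' k'k; rewrite [X in _ <= X]mulrCA ler_wpM2l ?lam_ge0 ?prev_le_K //.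
apply: le_trans (Gh_prev_growth k'k shl); apply: G_le_Gh_prev => //.
by have := s_prev_le k'k; lia.
Qed.

(* m_0 = -1, so the ratio bound needs k >= 2; for k = 1 the sum defining b is empty. *)
Lemma Bh_sh0_or_ratio_le : b = 0 \/
  0 <= M /\ forall t, (t0 <= t)%N -> M * (t%:R + 2) <= m * (t%:R + 1).
Proof.
case: k kK => [|[|n]] // nK; first by left; rewrite Bh_sh // big_geq ?mulr0.
have /andP[M_gt0 M_lt1] := mseq_gt0_lt1 F_gt0_lt1 (k:=n.+1) (ltnW nK).
right; split=> [|t t0t]; first exact: ltW.
apply: (@ratio_le _ n.+2) => //; first by rewrite ltW.
  have : (s n.+2 <= sh n.+2 + 2 + t)%N by lia.
  rewrite -(ler_nat R) !natrD; have := s_ge nK; lra.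
by rewrite -gamS gam_le_mseqS.
Qed.

Lemma geom_lin_Bh_ge0 t : 0 <= geom_lin M t * b.
Proof.
by case: Bh_sh0_or_ratio_le => [-> | [M_ge0 _]]; rewrite ?mulr0 // mulr_ge0 ?geom_lin_ge0 ?Bh_sh_ge0.
Qed.

Lemma geom_lin_Bh_decay j i : (t0 <= j)%N ->
  geom_lin M (j + i) * b <= m ^+ i * (geom_lin M j * b).
Proof.
move=> t0j; case: Bh_sh0_or_ratio_le => [-> | [M_ge0 ratio]]; first by rewrite !mulr0.
have /andP[m_gt0 _] := m_gt0_lt1.
by rewrite mulrA ler_wpM2r ?Bh_sh_ge0 // (geom_lin_decay _ M_ge0 (ltW m_gt0) ratio).
Qed.

Lemma geom_lin_Bh_le2 t : (t0 <= t)%N -> geom_lin M t * b <= 2.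
Proof.
move=> t0t; apply: le_trans (Bh_sh_le2 kK).
have /andP[m_gt0 m_lt1] := m_gt0_lt1.
have geom_t0_le1 : geom_lin M t0 <= 1.
  have := mseq_exp_le kK.
  have -> : (s k)%:R - (sh k)%:R - 1 = t0.+1%:R :> R.
    have sE : s k = (sh k + t0.+1 + 1)%N by have := sh_add2_le; lia.
    by rewrite [in LHS]sE !natrD; ring.
  by rewrite ler_pdivlMr ?ltr0n // mul1r.
have -> : t = (t0 + (t - t0))%N by lia.
apply: le_trans (geom_lin_Bh_decay _ (leqnn t0)) _.
apply: (@le_trans _ _ (geom_lin M t0 * b)).
  by rewrite ler_piMl ?geom_lin_Bh_ge0 // exprn_ile1 // ltW.
by rewrite ler_piMl ?Bh_sh_ge0.
Qed.

Lemma Bh_sh_addn t : (t0 <= t)%N -> Bh k (sh k + t) = geom_lin M t * b.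
Proof.
case: t => [|t] t0t; first by rewrite addn0 geom_lin0 mul1r.
rewrite Bh_gt_sh //; last by lia.
have -> : (sh k + t.+1 - sh k = t.+1)%N by lia.
exact: min_r (geom_lin_Bh_le2 t0t).
Qed.

Lemma Bh_ge0 l : (sh k <= l)%N -> 0 <= Bh k l.
Proof.
rewrite leq_eqVlt => /orP[/eqP <- | shl]; first exact: Bh_sh_ge0.
by rewrite (Bh_gt_sh kK shl) le_min geom_lin_Bh_ge0 ler0n.
Qed.

Lemma Bh_decay j i : (s k - 2 <= j)%N -> Bh k (j + i) <= m ^+ i * Bh k j.
Proof.
move=> s2j; have jE : j = (sh k + (j - sh k))%N by have := sh_add2_le; lia.
have t0j : (t0 <= j - sh k)%N by lia.
by rewrite jE -addnA !Bh_sh_addn ?geom_lin_Bh_decay // (leq_trans t0j) ?leq_addr.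
Qed.

Lemma B_le_Bh l : (sh k <= l)%N -> B k l <= Bh k l.
Proof.
move=> shl; have := B_le_geom_lin shl.
move: shl; rewrite leq_eqVlt => /orP[/eqP <- | shl]; first by rewrite subnn geom_lin0 mul1r.
by rewrite (Bh_gt_sh kK shl) le_min => ->; have /andP[_ ->] := B_ge0_le2 kK (ltnW shl).
Qed.

Lemma B_le_Bh_s1 l : (s k - 1 <= l)%N ->
  B k l <= m ^+ (l - (s k - 1)) * Bh k (s k - 1)%N.
Proof.
move=> s1l; apply: le_trans (B_le_Bh _) _; first by have := sh_add2_le; lia.
by rewrite -{1}(subnKC s1l) Bh_decay //; lia.
Qed.

Lemma B_le_Bh_s2 l : (s k - 1 <= l)%N ->
  B k l.-1 <= m ^+ (l - (s k - 1)) * Bh k (s k - 2)%N.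
Proof.
move=> s1l; apply: le_trans (B_le_Bh _) _; first by have := sh_add2_le; lia.
have -> : l.-1 = (s k - 2 + (l - (s k - 1)))%N by have := sh_add2_le; lia.
exact: Bh_decay.
Qed.

Lemma G_le_Gh l : (s k - 1 <= l)%N -> G k l <= Gh k l.
Proof.
move=> s1l; have s2 := sh_add2_le; have /andP[m_gt0 _] := m_gt0_lt1.
have /andP[F_gt0 F_lt1] := F_gt0_lt1 kK.
have Fm : F k <= m by rewrite F_le_mseq //; case/andP: kK.
set n := (l - (s k - 1))%N.
have D_term : F k ^+ n * D k <= m ^+ n * D k.
  by rewrite ler_wpM2r ?D_ge0 // lerXn2r ?nnegrE // ltW.
have sum_term : \sum_(s k - 1 <= l' < l) F k ^+ (l - l') * (B k l' + B k l'.-1)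
    <= (m ^+ n * (Bh k (s k - 1)%N + Bh k (s k - 2)%N)) *+ n.
  rewrite -sumr_const_nat; apply: ler_sum_nat => l' /andP[s1l' l'l].
  have -> : m ^+ n = m ^+ (l - l') * m ^+ (l' - (s k - 1)).
    by rewrite -exprD; congr (_ ^+ _); lia.
  rewrite -mulrA [m ^+ (l' - _) * _]mulrDr; apply: ler_pM.
  - by rewrite exprn_ge0 ?ltW.
  - have sh_l' : (sh k <= l'.-1)%N by lia.
    have /andP[B_ge0 _] := B_ge0_le2 kK (leq_trans sh_l' (leq_pred l')).
    have /andP[B1_ge0 _] := B_ge0_le2 kK sh_l'.
    exact: addr_ge0.
  - by rewrite lerXn2r ?nnegrE // ltW.
  - by rewrite lerD ?B_le_Bh_s1 ?B_le_Bh_s2.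
apply: le_trans (G_le_sum kK s1l) _.
apply: le_trans (lerD (lerD D_term sum_term) (B_le_Bh_s1 s1l)) _.
rewrite -(subnKC s1l) Gh_shift // Gh_s1 // subnKC // -/n /geom_lin.
apply: first_mid_last_le; rewrite ?exprn_ge0 ?D_ge0 ?Bh_ge0 ?(ltW m_gt0) //; lia.
Qed.

Lemma Gh_ge0 l : (s k - 1 <= l)%N -> 0 <= Gh k l.
Proof.
move=> s1l; have s2 := sh_add2_le; have /andP[m_gt0 _] := m_gt0_lt1.
rewrite -(subnKC s1l) Gh_shift // Gh_s1 //.
rewrite mulr_ge0 ?geom_lin_ge0 ?(ltW m_gt0) // !addr_ge0 ?D_ge0 ?Bh_ge0 //; lia.
Qed.

End InductionStep.

Lemma B_G_le_Bh_Gh k : (1 <= k <= K)%N ->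
  (forall l, (sh k <= l)%N -> B k l <= Bh k l) /\
  (forall l, (s k - 1 <= l)%N -> G k l <= Gh k l /\ 0 <= Gh k l).
Proof.
elim/ltn_ind: k => k IH kK.
have IH_prev k' l : (1 <= k' < k)%N -> (s k' - 1 <= l)%N ->
    G k' l <= Gh k' l /\ 0 <= Gh k' l.
  move=> k'k s1l; have k'K : (1 <= k' <= K)%N by move: kK k'k; lia.
  by have [_ /(_ l s1l)] := IH k' (proj2 (andP k'k)) k'K.
have G_le_Gh_prev k' l k'k s1l := (IH_prev k' l k'k s1l).1.
have Gh_ge0_prev k' l k'k s1l := (IH_prev k' l k'k s1l).2.
split=> [l|l s1l]; first exact: B_le_Bh.
by split; [exact: G_le_Gh | exact: Gh_ge0].
Qed.

End Propagation.

Theorem lemma3 (R : realType) (K : nat) (lam C F D : nat -> R)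
  (sh s : nat -> nat) (B G Bh Gh : nat -> nat -> R) :
  (0 < K)%N ->
  (forall k, (1 <= k <= K)%N -> 0 <= lam k) ->
  (forall k, (1 <= k <= K)%N -> 0 <= C k) ->
  (forall k, (1 <= k <= K)%N -> 0 < F k < 1) ->
  (1 <= sh 1)%N ->
  (forall k, (1 <= k < K)%N -> (sh k <= sh k.+1)%N) ->
  s 0%N = 1%N ->
  (forall k, (k < K)%N -> (s k <= s k.+1)%N) ->
  (forall k, (1 <= k <= K)%N -> 0 <= D k) ->
  (* hypotheses on B and G *)
  (forall k l, (1 <= k <= K)%N -> (sh k <= l)%N -> 0 <= B k l <= 2) ->
  (forall k l, (1 <= k <= K)%N -> (sh k <= l)%N ->
     B k l <= C k * \sum_(1 <= k' < k) lam k' * G k' l.-1) ->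
  (forall k l, (1 <= k <= K)%N -> (s k - 1 <= l)%N ->
     G k l <= F k ^+ (l - (s k - 1)) * D k
              + \sum_(s k - 1 <= l' < l) F k ^+ (l - l') * (B k l' + B k l'.-1)
              + B k l) ->
  (* recursive definitions of hat B and hat G *)
  (forall k, (1 <= k <= K)%N ->
     Bh k (sh k) = C k * \sum_(1 <= k' < k) lam k' * Gh k' (sh k).-1) ->
  (forall k l, (1 <= k <= K)%N -> (sh k < l)%N ->
     Bh k l = Num.min 2 (mseq F k.-1 ^+ (l - sh k) * (l - sh k).+1%:R * Bh k (sh k))) ->
  (forall k, (1 <= k <= K)%N ->
     Gh k (s k - 1)%N = D k + Bh k (s k - 1)%N + Bh k (s k - 2)%N) ->
  (forall k l, (1 <= k <= K)%N -> (s k <= l)%N ->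
     Gh k l = mseq F k ^+ (l - s k).+1 * (l - s k).+2%:R * Gh k (s k - 1)%N) ->
  (* standing assumptions *)
  (forall k, (1 <= k < K)%N -> (s k <= sh k.+1)%N) ->
  (forall k, (1 <= k <= K)%N ->
     mseq F k.-1 ^+ (s k - sh k - 2) <= 1 / ((s k)%:R - (sh k)%:R - 1)) ->
  (forall k, (1 <= k <= K)%N ->
     k%:R * mseq F k.-1 / (1 - mseq F k.-1) + (sh k)%:R + 2 <= (s k)%:R) ->
  (forall k, (1 <= k <= K)%N -> Bh k (sh k) <= 2) ->
  forall k, (1 <= k <= K)%N ->
    (forall l, (sh k <= l)%N -> B k l <= Bh k l) /\
    (forall l, (s k - 1 <= l)%N -> G k l <= Gh k l).
Proof.
move=> _ lam_ge0 C_ge0 F_gt0_lt1 _ sh_leS _ _ D_ge0 B_ge0_le2 B_le_sum G_le_sum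
  Bh_sh Bh_gt_sh Gh_s1 Gh_ge_s s_le_shS mseq_exp_le s_ge Bh_sh_le2 k kK.
have [B_le_Bh G_le_Gh] := B_G_le_Bh_Gh lam_ge0 C_ge0 F_gt0_lt1 sh_leS D_ge0 B_ge0_le2
  B_le_sum G_le_sum Bh_sh Bh_gt_sh Gh_s1 Gh_ge_s s_le_shS mseq_exp_le s_ge Bh_sh_le2 kK.
by split=> // l /G_le_Gh[].
Qed.
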